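(* Let $IS\in\{\Box,\blacksquare\}^2$. There is no correct compositional translation from $\mathrm{SYNCSIMPLE}$ into $\mathrm{LOCKSIMPLE}_{2,IS}$ of blocking type $(P_1P_1,P_2)$.
   Context: $\mathrm{SYNCSIMPLE}$: subprocesses $\mathcal{U} ::= \checkmark \mid 0 \mid\, !\mathcal{U} \mid\, ?\mathcal{U}$; processes are finite parallel compositions ($\mid$ associative, commutative, $0$ a unit). Reduction: $!\mathcal{U}_1\mid ?\mathcal{U}_2\mid \mathcal{P}\to \mathcal{U}_1\mid\mathcal{U}_2\mid\mathcal{P}$. Successful: of form $\checkmark\mid\mathcal{P}$; may-convergent: reduces to a successful process; must-convergent: every reachable process is may-convergent. $\mathrm{LOCKSIMPLE}_{k,IS}$ ($IS\in\{\Box,\blacksquare\}^k$, $\Box$ empty, $\blacksquare$ full): subprocesses are words over $\{P_1,T_1,\dots,P_k,T_k\}$ followed by $0$ or $\checkmark$; states $(\mathcal{P},C)$ reduce by $(P_i\mathcal{U}\mid\mathcal{P},C)\to(\mathcal{U}\mid\mathcal{P},C[C_i:=\blacksquare])$ only if $C_i=\Box$, and $(T_i\mathcal{U}\mid\mathcal{P},C)\to(\mathcal{U}\mid\mathcal{P},C[C_i:=\Box])$ always. Success = process contains $\checkmark$; a process $\mathcal{P}$ is may/must-convergent iff the state $(\mathcal{P},IS)$ is. A compositional translation $\tau$ is given by words $\tau(!),\tau(?)$ with $\tau(0)=0$, $\tau(\checkmark)=\checkmark$, $\tau(!\mathcal{U})=\tau(!)\tau(\mathcal{U})$, $\tau(?\mathcal{U})=\tau(?)\tau(\mathcal{U})$,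 $\tau$ commuting with $\mid$; correct = preserves and reflects may- and must-convergence. Blocking type: for a word $S$, run $S$ as a single subprocess from $IS$; if it gets stuck at an occurrence of $P_i$, that occurrence ends the blocking prefix; if it is the first symbol from $\{P_i,T_i\}$ in $S$ the blocking type is $P_i$, otherwise the blocking prefix has form $R_1P_iR_2P_i$ with $R_2$ containing no $P_i,T_i$ and the blocking type is $P_iP_i$. $\tau$ has blocking type $(W_1,W_2)$ if $\tau(!)$ has type $W_1$ and $\tau(?)$ type $W_2$. *)

From Stdlib Require Import Permutation Relations List.
Import ListNotations.
From mathcomp Require Import all_boot.
Set Implicit Arguments. Unset Strict Implicit. Unset Printing Implicit Defensive.

Inductive SU : Type := SCheck | SZero | SSend of SU | SRecv of SU.

(* processes: finite parallel compositions, represented as lists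
   considered up to permutation (| associative, commutative). *)
Definition sproc := list SU.

Definition sstep (P Q : sproc) : Prop :=
  exists U1 U2 R, Permutation P (SSend U1 :: SRecv U2 :: R) /\
                  Permutation Q (U1 :: U2 :: R).

Definition ssuccessful (P : sproc) : Prop := In SCheck P.
Definition sreach := clos_refl_trans sproc sstep.
Definition smay (P : sproc) : Prop := exists Q, sreach P Q /\ ssuccessful Q.
Definition smust (P : sproc) : Prop := forall Q, sreach P Q -> smay Q.

(* LP i = P_{i+1}, LT i = T_{i+1}; indices are 'I_k *)
Inductive lsym (k : nat) : Type := LP of 'I_k | LT of 'I_k.
Definition lword k := list (lsym k).
(* a subprocess: a word followed by 0 (false) or checkmark (true) *)
Definition lsub k := (lword k * bool)%type.
Definition lproc k := list (lsub k).
(* lock contents: true = full (blacksquare), false = empty (box) *)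
Definition lconf k := {ffun 'I_k -> bool}.
Definition lupd k (C : lconf k) (i : 'I_k) (b : bool) : lconf k :=
  [ffun j => if j == i then b else C j].
Definition lstate k := (lproc k * lconf k)%type.

Definition lstep k (s s' : lstate k) : Prop :=
  (exists i w e R, Permutation s.1 ((LP i :: w, e) :: R) /\ s.2 i = false /\
      Permutation s'.1 ((w, e) :: R) /\ s'.2 = lupd s.2 i true)
  \/
  (exists i w e R, Permutation s.1 ((LT i :: w, e) :: R) /\
      Permutation s'.1 ((w, e) :: R) /\ s'.2 = lupd s.2 i false).

Definition lsuccessful k (s : lstate k) : Prop := In ([::], true) s.1.
Definition lreach k := clos_refl_trans (lstate k) (@lstep k).
Definition lmay k (s : lstate k) : Prop :=
  exists s', lreach s s' /\ lsuccessful s'.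
Definition lmust k (s : lstate k) : Prop :=
  forall s', lreach s s' -> lmay s'.

Fixpoint tr k (ws wr : lword k) (U : SU) : lsub k :=
  match U with
  | SCheck => ([::], true)
  | SZero => ([::], false)
  | SSend U' => let t := tr ws wr U' in (ws ++ t.1, t.2)
  | SRecv U' => let t := tr ws wr U' in (wr ++ t.1, t.2)
  end.
Definition trproc k (ws wr : lword k) (P : sproc) : lproc k := map (tr ws wr) P.

(* tau(!) = ws, tau(?) = wr; correct = preserves and reflects may and must *)
Definition correct_translation k (IS : lconf k) (ws wr : lword k) : Prop :=
  forall P : sproc,
    (smay P <-> lmay (trproc ws wr P, IS)) /\
    (smust P <-> lmust (trproc ws wr P, IS)).

(* sequential run of a word as a single subprocess; None = gets stuck *)
Fixpoint lrun k (C : lconf k) (w : lword k) : option (lconf k) :=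
  match w with
  | [::] => Some C
  | LP i :: w' => if C i then None else lrun (lupd C i true) w'
  | LT i :: w' => lrun (lupd C i false) w'
  end.

Definition mentions k (i : 'I_k) (w : lword k) : Prop :=
  In (LP i) w \/ In (LT i) w.

Inductive btype (k : nat) : Type := BP of 'I_k | BPP of 'I_k.

(* blocking prefix ends at a stuck occurrence of P_i: the run of the part
   before it does not get stuck and reaches a configuration with C_i full. *)
Definition has_btype k (IS : lconf k) (S : lword k) (b : btype k) : Prop :=
  match b with
  | BP i => exists R post C, S = R ++ LP i :: post /\ ~ mentions i R /\
              lrun IS R = Some C /\ C i = true
  | BPP i => exists R1 R2 post C,
              S = R1 ++ LP i :: R2 ++ LP i :: post /\ ~ mentions i R2 /\
              lrun IS (R1 ++ LP i :: R2) = Some C /\ C i = true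
  end.

Definition trans_btype k (IS : lconf k) (ws wr : lword k) (b1 b2 : btype k) :=
  has_btype IS ws b1 /\ has_btype IS wr b2.

(* The source process ?0 | !✓ | ... | !✓ with m+1 senders is must-convergent:
   its only reduction exposes a ✓.  In the translation, lock 2 starts full
   (the receiver word τ(?) blocks on P_2 before touching lock 2), and
   τ(!) = p P_1 post where p, run from any configuration with lock 1 empty,
   goes through and leaves lock 1 full.  Let one sender run p, then run the
   receiver as far as it goes, letting a fresh sender run p right after each
   T_1 of the receiver.  Lock 1 stays full, so the receiver ends blocked (or
   finished, with continuation 0) while every sender waits at P_1: a stuck,
   unsuccessful state.  With m the number of refills this is reachable, so the
   translation is not must-convergent. *)
From Stdlib Require Import Permutation Relations List.
From mathcomp Require Import all_boot.

Set Implicit Arguments. Unset Strict Implicit. Unset Printing Implicit Defensive.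

Lemma lrun_cat k (C : lconf k) u v :
  lrun C (u ++ v) = obind (fun D => lrun D v) (lrun C u).
Proof. by elim: u C => [|[] j u IH] C //=; case: (C j). Qed.

Lemma lrun_unmentioned k (C D : lconf k) i w :
  lrun C w = Some D -> ~ mentions i w -> D i = C i.
Proof.
elim: w C => [|a w IH] C /=; first by case=> ->.
have mentions_tail : ~ mentions i (a :: w) -> ~ mentions i w.
  by move=> Hm [Hw|Hw]; apply: Hm; [left|right]; right.
case: a mentions_tail => j mentions_tail.
- case: (C j) => // H Hm; rewrite (IH _ H (mentions_tail Hm)) ffunE.
  by case: eqP => // Eij; subst; case: Hm; left; left.
- move=> H Hm; rewrite (IH _ H (mentions_tail Hm)) ffunE.
  by case: eqP => // Eij; subst; case: Hm; right; left.
Qed.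

Lemma lrun_less_full k (C C' D : lconf k) w :
  (forall j, C' j -> C j) -> lrun C w = Some D -> exists D', lrun C' w = Some D'.
Proof.
elim: w C C' D => [|[] j w IH] C C' D /= Hle; first by eauto.
- case Cj: (C j) => // H.
  have -> : C' j = false by apply/negbTE/negP => /Hle; rewrite Cj.
  by apply: IH H => l; rewrite !ffunE; case: (l == j) => //; apply: Hle.
- by apply: IH => l; rewrite !ffunE; case: (l == j) => //; apply: Hle.
Qed.

Lemma lrun_full_after_P k (C D : lconf k) i u v :
  lrun C (u ++ LP i :: v) = Some D -> ~ mentions i v -> D i.
Proof.
rewrite lrun_cat; case: (lrun C u) => [E|] //=; case: (E i) => // H Hv.
by rewrite (lrun_unmentioned H Hv) ffunE eqxx.
Qed.

Definition fills k (i : 'I_k) (C : lconf k) (w : lword k) : Prop :=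
  exists2 D, lrun C w = Some D & D i.

Lemma btype_BP_full k (IS : lconf k) S i : has_btype IS S (BP i) -> IS i.
Proof. by case=> R [post [C [_ [Hm [HR HC]]]]]; rewrite -(lrun_unmentioned HR Hm). Qed.

Lemma btype_BPP_fills k (IS : lconf k) S i :
  has_btype IS S (BPP i) -> (forall j, j != i -> IS j) ->
  exists p post, S = p ++ LP i :: post /\
                 forall D : lconf k, (D i -> IS i) -> fills i D p.
Proof.
case=> R1 [R2 [post [C [-> [Hm [HC _]]]]]] others_full.
exists (R1 ++ LP i :: R2), post; split; first by rewrite -catA.
move=> D HD; have [|D' HD'] := lrun_less_full (C' := D) _ HC.
  by move=> j; case: (eqVneq j i) => [->|/others_full ->].
by exists D' => //; apply: lrun_full_after_P HD' Hm.
Qed.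

Lemma Permutation_cons_cat (T : Type) (x : T) s1 s2 :
  Permutation (x :: s1 ++ s2) (s1 ++ x :: s2).
Proof.
by elim: s1 => //= y s1 IH; apply: Permutation_trans (perm_swap _ _ _) (perm_skip _ IH).
Qed.

Definition lreachp k (s t : lstate k) : Prop :=
  exists t', lreach s t' /\ Permutation t'.1 t.1 /\ t'.2 = t.2.

Lemma lstep_perm_l k (s t u : lstate k) :
  lstep s u -> Permutation t.1 s.1 -> t.2 = s.2 -> lstep t u.
Proof.
move=> [[i [w [e [R [H1 H2]]]]]|[i [w [e [R [H1 H2]]]]]] Hp He.
- by left; exists i, w, e, R; rewrite He; split=> //; apply: Permutation_trans Hp H1.
- by right; exists i, w, e, R; rewrite He; split=> //; apply: Permutation_trans Hp H1.
Qed.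

Lemma lreach_perm_l k (s u t : lstate k) :
  lreach s u -> Permutation t.1 s.1 -> t.2 = s.2 -> lreachp t u.
Proof.
move=> Hr; elim: Hr t => {s u} [s u Hs|s|s u v _ IH1 _ IH2] t Hp He.
- by exists u; split=> //; apply/rt_step/(lstep_perm_l Hs).
- by exists t; split=> //; apply: rt_refl.
- have [u' [Ru [Pu Eu]]] := IH1 t Hp He.
  have [v' [Rv PEv]] := IH2 u' Pu Eu.
  by exists v'; split=> //; apply: rt_trans Ru Rv.
Qed.

Lemma lreachp_refl k (s : lstate k) : lreachp s s.
Proof. by exists s; split=> //; apply: rt_refl. Qed.

Lemma lreachp_trans k (s t u : lstate k) :
  lreachp s t -> lreachp t u -> lreachp s u.
Proof.
move=> [t' [Rt [Pt Et]]] [u' [Ru [Pu Eu]]].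
have [u'' [Ru' [Pu' Eu']]] := lreach_perm_l Ru Pt Et.
exists u''; split; first by apply: rt_trans Rt Ru'.
by split; [apply: Permutation_trans Pu' Pu | rewrite Eu'].
Qed.

Lemma lreachp_perm k (P Q : lproc k) C : Permutation P Q -> lreachp (P, C) (Q, C).
Proof. by move=> H; exists (P, C); split=> //; apply: rt_refl. Qed.

Lemma lreachp_run_head k (C D : lconf k) w rest e Q :
  lrun C w = Some D -> lreachp ((w ++ rest, e) :: Q, C) ((rest, e) :: Q, D).
Proof.
elim: w C => [|[] j w IH] C /=; first by case=> ->; apply: lreachp_refl.
- case Cj: (C j) => // /IH; apply: lreachp_trans.
  by exists ((w ++ rest, e) :: Q, lupd C j true); split=> //; apply/rt_step; left;
     exists j, (w ++ rest), e, Q.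
- move/IH; apply: lreachp_trans.
  by exists ((w ++ rest, e) :: Q, lupd C j false); split=> //; apply/rt_step; right;
     exists j, (w ++ rest), e, Q.
Qed.

Lemma lreachp_run_second k (C D : lconf k) w rest e x Q :
  lrun C w = Some D -> lreachp (x :: (w ++ rest, e) :: Q, C) (x :: (rest, e) :: Q, D).
Proof.
move=> HD; apply: lreachp_trans (lreachp_perm _ (perm_swap _ _ _)).
apply: lreachp_trans (lreachp_run_head _ _ _ HD).
exact: lreachp_perm (perm_swap _ _ _).
Qed.

Definition blocked k (C : lconf k) (w : lword k) : Prop :=
  if w is a :: _ then lrun C [:: a] = None else True.

Lemma lstep_blocked k (P : lproc k) C s :
  (forall x, In x P -> blocked C x.1) -> ~ lstep (P, C) s.
Proof.
move=> HP [[j [w [e [R [HPR [Cj _]]]]]]|[j [w [e [R [HPR _]]]]]];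
  have /HP /= := Permutation_in _ (Permutation_sym HPR) (in_eq _ _); by rewrite ?Cj.
Qed.

Lemma stalled_not_lmay k (P : lproc k) C :
  (forall x, In x P -> blocked C x.1) -> ~ In ([::], true) P -> ~ lmay (P, C).
Proof.
move=> HP Hs [s' [Hr Hsucc]].
case: (clos_rt_rt1n _ _ _ _ Hr) Hsucc => [//|y z Hstep _ _].
exact: lstep_blocked HP Hstep.
Qed.

Lemma In_nseq (T : Type) (x y : T) n : In x (nseq n y) -> x = y.
Proof. by elim: n => [|n IH] //= [->|/IH]. Qed.

Lemma waiting_senders_not_lmay k (i : 'I_k) (C : lconf k) r post b n P :
  blocked C r -> C i ->
  Permutation P ((r, false) :: nseq n (LP i :: post, b)) -> ~ lmay (P, C).
Proof.
move=> Hr Ci HP; apply: stalled_not_lmay => [x|].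
- move=> Hx; case: (in_inv (Permutation_in x HP Hx)) => [<- //|Hn].
  by rewrite (In_nseq Hn) /= Ci.
- move=> Hin; case: (in_inv (Permutation_in _ HP Hin)) => [//|Hn].
  by have := In_nseq Hn.
Qed.

Section RefillingSenders.

Variables (k : nat) (i : 'I_k) (p rest : lword k) (e b : bool).
Hypothesis refill : forall D : lconf k, D i = false -> fills i D p.

Lemma receiver_reaches_blocked (r : lword k) (C : lconf k) : C i ->
  exists (m : nat) (r' : lword k) (C' : lconf k), [/\ C' i, blocked C' r' & forall n,
    lreachp ((r, e) :: nseq n (rest, b) ++ nseq m (p ++ rest, b), C)
            ((r', e) :: nseq (n + m) (rest, b), C')].
Proof.
elim: r C => [|a r IH] C Ci.
  by exists 0, [::], C; split=> // n; rewrite addn0 cats0; apply: lreachp_refl.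
case Ha: (lrun C [:: a]) => [C1|]; last first.
  by exists 0, (a :: r), C; split=> // n; rewrite addn0 cats0; apply: lreachp_refl.
have step_a Q : lreachp ((a :: r, e) :: Q, C) ((r, e) :: Q, C1).
  exact: (lreachp_run_head (w := [:: a]) r e Q Ha).
case C1i: (C1 i).
  have [m [r' [C' [C'i Hr' Hreach]]]] := IH C1 C1i.
  by exists m, r', C'; split=> // n; apply: lreachp_trans (step_a _) (Hreach n).
have [D HD Di] := refill C1i.
have [m [r' [C' [C'i Hr' Hreach]]]] := IH D Di.
exists m.+1, r', C'; split=> // n.
apply: lreachp_trans (step_a _) _.
(* [C1 i = false] means that [a] was [LT i]: a fresh sender refills lock [i]. *)
apply: lreachp_trans (lreachp_perm _ (perm_skip _ (Permutation_sym
  (Permutation_cons_cat _ _ _)))) _.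
apply: lreachp_trans (lreachp_run_second _ _ _ _ HD) _.
by rewrite -addSnnS; exact: (Hreach n.+1).
Qed.

End RefillingSenders.

Definition lone_receiver m : sproc := SRecv SZero :: nseq m.+1 (SSend SCheck).

Lemma sreach_lone_receiver m Q :
  sreach (lone_receiver m) Q -> Permutation Q (lone_receiver m) \/ In SCheck Q.
Proof.
move=> HQ; elim: (clos_rt_rtn1 _ _ _ _ HQ) => [|Q1 Q2 [U1 [U2 [R [H1 H2]]]] _ IH].
  by left.
right; apply: Permutation_in (Permutation_sym H2) _.
case: IH => [HQ1|/(Permutation_in _ H1) [//|[//|HR]]]; last by right; right.
have Hin : In (SSend U1) (lone_receiver m).
  by apply: Permutation_in HQ1 _; apply: Permutation_in (Permutation_sym H1) _; left.
by case: (in_inv Hin) => [//|Hn]; case: (In_nseq Hn) => ->; left.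
Qed.

Lemma smust_lone_receiver m : smust (lone_receiver m).
Proof.
move=> Q /sreach_lone_receiver [HQ|HQ]; last by exists Q; split=> //; apply: rt_refl.
exists (SCheck :: SZero :: nseq m (SSend SCheck)); split; last by left.
apply: rt_step; exists SCheck, SZero, (nseq m (SSend SCheck)); split=> //.
exact: Permutation_trans HQ (perm_swap _ _ _).
Qed.

Lemma I2_neq0 (j : 'I_2) : j != ord0 -> j = ord_max.
Proof. by case: j => [[|[|//]]] Hj // _; apply: val_inj. Qed.

Theorem lemma5p11 (IS : lconf 2) (ws wr : lword 2) :
  trans_btype IS ws wr (BPP (@ord0 1)) (BP (@ord_max 1)) ->
  ~ correct_translation IS ws wr.
Proof.
move=> [Hws /btype_BP_full IS1] Hcorrect.
have others_full (j : 'I_2) : j != ord0 -> IS j by move/I2_neq0 ->.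
have [p [post [Ews Hfill]]] := btype_BPP_fills Hws others_full.
have [C0 HC0 C0_full] := Hfill IS id.
have refill (D : lconf 2) : D ord0 = false -> fills ord0 D p.
  by move=> D0; apply: Hfill; rewrite D0.
have [m [r' [C' [C'_full r'_blocked Hreach]]]] :=
  receiver_reaches_blocked (LP ord0 :: post) false true refill wr C0_full.
have Hmust := (Hcorrect (lone_receiver m)).2.1 (@smust_lone_receiver m).
have [[P D] [HP [Hperm /= DC']]] :
    lreachp (trproc ws wr (lone_receiver m), IS)
            ((r', false) :: nseq (1 + m) (LP ord0 :: post, true), C').
  rewrite /trproc /= map_nseq /= !cats0 Ews.
  by apply: lreachp_trans (Hreach 1); apply: lreachp_run_second.
subst D; exact: waiting_senders_not_lmay r'_blocked C'_full Hperm (Hmust _ HP).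
Qed.
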